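(* Let $R>0$ and let $A\subset\mathbb{R}^d$ be such that $A$ and $\overline{A^c}$ are $R$-supported bodies and $\partial A=\partial\overline{A^c}$. Then $\mathrm{reach}(A)\ge R$.
   Context: A body is a nonempty closed subset of $\mathbb{R}^d$; $A^c=\mathbb{R}^d\setminus A$; $\overline{X}$ is the closure. $B(x)=\{y:|y-x|<R\}$; $S^{d-1}$ the unit sphere. For a body $A$ and $a\in\partial A$, $\mathcal{N}_R(A,a)=\{v\in S^{d-1}: A\cap B(a+Rv)=\emptyset\}$; $A$ is $R$-supported if $\mathcal{N}_R(A,a)\ne\emptyset$ for all $a\in\partial A$. $\mathrm{Unp}(A)$ is the set of points with a unique nearest point in $A$; $\mathrm{reach}(A,a)=\sup\{\rho>0: \{x:|x-a|<\rho\}\subset\mathrm{Unp}(A)\}$, $\mathrm{reach}(A)=\inf_{a\in A}\mathrm{reach}(A,a)$. *)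

From HB Require Import structures.
From mathcomp Require Import all_boot all_order all_algebra.
From mathcomp Require Import classical_sets boolp reals constructive_ereal ereal.
Set Implicit Arguments. Unset Strict Implicit. Unset Printing Implicit Defensive.
Import Order.TTheory GRing.Theory Num.Theory.
Local Open Scope ring_scope.
Local Open Scope classical_set_scope.

Definition edist (R : realType) (d : nat) (x y : 'rV[R]_d) : R :=
  Num.sqrt (\sum_(i < d) (x ord0 i - y ord0 i) ^+ 2).

Definition eball (R : realType) (d : nat) (c : 'rV[R]_d) (r : R) : set 'rV[R]_d :=
  [set y | edist y c < r].

Definition eclosure (R : realType) (d : nat) (A : set 'rV[R]_d) : set 'rV[R]_d :=
  [set x | forall e : R, 0 < e -> exists y, A y /\ edist x y < e].

Definition eclosed (R : realType) (d : nat) (A : set 'rV[R]_d) : Prop :=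
  eclosure A `<=` A.

Definition body (R : realType) (d : nat) (A : set 'rV[R]_d) : Prop :=
  A !=set0 /\ eclosed A.

Definition eboundary (R : realType) (d : nat) (A : set 'rV[R]_d) : set 'rV[R]_d :=
  eclosure A `&` eclosure (~` A).

Definition unit_sphere (R : realType) (d : nat) (v : 'rV[R]_d) : Prop :=
  edist v 0 = 1.

Definition normal_set (R : realType) (d : nat) (rad : R) (A : set 'rV[R]_d)
  (a : 'rV[R]_d) : set 'rV[R]_d :=
  [set v | unit_sphere v /\ A `&` eball (a + rad *: v) rad = set0].

Definition R_supported (R : realType) (d : nat) (rad : R) (A : set 'rV[R]_d) : Prop :=
  forall a, eboundary A a -> normal_set rad A a !=set0.

Definition Unp (R : realType) (d : nat) (A : set 'rV[R]_d) : set 'rV[R]_d :=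
  [set x | exists a, (A a /\ forall b, A b -> edist x a <= edist x b) /\
     forall a', (A a' /\ forall b, A b -> edist x a' <= edist x b) -> a' = a].

Definition reach_at (R : realType) (d : nat) (A : set 'rV[R]_d) (a : 'rV[R]_d)
  : \bar R :=
  ereal_sup [set rho%:E | rho in [set rho : R | 0 < rho /\ eball a rho `<=` Unp A]].

Definition reach (R : realType) (d : nat) (A : set 'rV[R]_d) : \bar R :=
  ereal_inf [set reach_at A a | a in A].

From Pilot Require Import Defs.
From mathcomp Require Import all_boot all_order all_algebra.
From mathcomp Require Import classical_sets boolp reals constructive_ereal ereal.
From mathcomp Require Import topology normedtype derive matrix_normedtype.
From mathcomp Require Import ring lra.
(* [topology] exports a distance also named [edist]; restore the Euclidean one. *)
Import Defs.
Import numFieldNormedType.Exports.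
Set Implicit Arguments. Unset Strict Implicit. Unset Printing Implicit Defensive.
Import Order.TTheory GRing.Theory Num.Theory.
Local Open Scope ring_scope.
Local Open Scope classical_set_scope.

(* Let y be at distance less than R from A, and let p be a nearest point of A
   to y, at distance del > 0.  The segment from p to y leaves A at once, so p
   lies on the common boundary of A and of the closure of its complement; the
   latter is R-supported, which yields a ball B(p + R w) of radius R inside A.
   The ball B(y, del) misses A, so the two balls touch at p and p = y + del w.
   The supporting ball of A at p also touches B(p + R w) at p, so its center
   is p - R w; being free of A, its complement meets the sphere S(y, del) only
   at p.  Hence p is the only nearest point of A to y. *)

Section Euclidean.
Variables (R : realType) (d : nat).
Implicit Types (x y z c u v w : 'rV[R]_d) (a b r : R).

Definition dot u v : R := \sum_(i < d) u ord0 i * v ord0 i.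

Lemma dot_ge0 u : 0 <= dot u u.
Proof. by apply: sumr_ge0 => i _; rewrite -expr2 sqr_ge0. Qed.

Lemma dot_eq0 u : dot u u = 0 -> u = 0.
Proof.
move=> /eqP; rewrite psumr_eq0 => [/allP u0|i _]; last by rewrite -expr2 sqr_ge0.
apply/rowP => i; rewrite mxE.
by have /implyP/(_ isT) := u0 i (mem_index_enum i); rewrite mulf_eq0 orbb => /eqP.
Qed.

Lemma dotDZ a b u v :
  dot (a *: u + b *: v) (a *: u + b *: v) =
  a ^+ 2 * dot u u + 2 * a * b * dot u v + b ^+ 2 * dot v v.
Proof.
by rewrite /dot !mulr_sumr -!big_split; apply: eq_bigr => i _; rewrite !mxE /=; ring.
Qed.

Lemma dotZ a u : dot (a *: u) (a *: u) = a ^+ 2 * dot u u.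
Proof. by rewrite /dot mulr_sumr; apply: eq_bigr => i _; rewrite !mxE /=; ring. Qed.

Lemma edistE x y : edist x y = Num.sqrt (dot (x - y) (x - y)).
Proof.
by rewrite /edist /dot; congr Num.sqrt; apply: eq_bigr => i _; rewrite !mxE expr2.
Qed.

Lemma edist_ge0 x y : 0 <= edist x y.
Proof. by rewrite edistE sqrtr_ge0. Qed.

Lemma edist_sqr x y : edist x y ^+ 2 = dot (x - y) (x - y).
Proof. by rewrite edistE sqr_sqrtr // dot_ge0. Qed.

Lemma edist_lt_sqr x y r : 0 < r -> (edist x y < r) = (dot (x - y) (x - y) < r ^+ 2).
Proof.
move=> r0; rewrite edistE -{1}(ger0_norm (ltW r0)) -sqrtr_sqr ltr_sqrt //.
by rewrite exprn_gt0.
Qed.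

Lemma edist_eq0 x y : edist x y = 0 -> x = y.
Proof.
move=> xy; apply/eqP; rewrite -subr_eq0; apply/eqP/dot_eq0.
by rewrite -edist_sqr xy expr0n.
Qed.

Lemma edist_gt0 x y : x <> y -> 0 < edist x y.
Proof. by move=> xy; rewrite lt_neqAle edist_ge0 andbT eq_sym; apply/eqP => /edist_eq0. Qed.

Lemma edistxx x : edist x x = 0.
Proof. by rewrite edistE subrr /dot big1 ?sqrtr0 // => i _; rewrite mxE mul0r. Qed.

Lemma edist_addZ x u a : edist x (x + a *: u) = `|a| * edist u 0.
Proof.
rewrite !edistE; have -> : x - (x + a *: u) = (- a) *: (u - 0).
  by apply/rowP => i; rewrite !mxE; ring.
by rewrite dotZ sqrtrM ?sqr_ge0 // sqrtr_sqr normrN.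
Qed.

Lemma edistC x y : edist x y = edist y x.
Proof.
rewrite !edistE; have -> : y - x = (-1) *: (x - y) by rewrite scaleN1r opprB.
by rewrite dotZ sqrrN expr1n mul1r.
Qed.

Lemma edist_lerp x y a : edist x (x + a *: (y - x)) = `|a| * edist x y.
Proof. by rewrite edist_addZ [edist x y]edistC !edistE subr0. Qed.

Lemma unit_sphere_dot w : unit_sphere w -> dot w w = 1.
Proof. by rewrite /unit_sphere => w1; rewrite -(subr0 w) -edist_sqr w1 expr1n. Qed.

Lemma edist_add_unit x w r : unit_sphere w -> 0 <= r -> edist x (x + r *: w) = r.
Proof. by move=> w1 r0; rewrite edist_addZ w1 mulr1 ger0_norm. Qed.

Lemma cauchy_schwarz u v : dot u v <= Num.sqrt (dot u u) * Num.sqrt (dot v v).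
Proof.
set a := Num.sqrt (dot u u); set b := Num.sqrt (dot v v).
have a2 : a ^+ 2 = dot u u by rewrite sqr_sqrtr // dot_ge0.
have b2 : b ^+ 2 = dot v v by rewrite sqr_sqrtr // dot_ge0.
have [a0 b0] : 0 <= a /\ 0 <= b by split; apply: sqrtr_ge0.
have := dot_ge0 (b *: u + (- a) *: v); rewrite dotDZ -a2 -b2 => H.
have [ab0|ab] := ltP 0 (a * b).
  have : 0 <= a * b * (a * b - dot u v) by nra.
  by rewrite pmulr_rge0 // subr_ge0.
have /eqP : a * b = 0 by apply/eqP; rewrite eq_le ab mulr_ge0.
rewrite mulf_eq0 => /orP[] /eqP ab0.
- have -> : u = 0 by apply: dot_eq0; rewrite -a2 ab0 expr0n.
  by rewrite /dot big1 ?mulr_ge0 // => i _; rewrite mxE mul0r.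
- have -> : v = 0 by apply: dot_eq0; rewrite -b2 ab0 expr0n.
  by rewrite /dot big1 ?mulr_ge0 // => i _; rewrite mxE mulr0.
Qed.

Lemma edist_triangle x y z : edist x z <= edist x y + edist y z.
Proof.
have xz : x - z = 1 *: (x - y) + 1 *: (y - z) by apply/rowP => i; rewrite !mxE; ring.
rewrite -(ler_pXn2r (_ : 0 < 2)%N) ?nnegrE ?addr_ge0 ?edist_ge0 //.
rewrite edist_sqr xz dotDZ -!edist_sqr.
have := cauchy_schwarz (x - y) (y - z); rewrite -!edistE.
have := edist_ge0 x y; have := edist_ge0 y z; nra.
Qed.

Lemma edist_triangle_eq x y z : edist x z = edist x y + edist y z ->
  edist y z *: (y - x) = edist x y *: (z - y).
Proof.
set a := edist x y; set b := edist y z => xz.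
have Da : dot (y - x) (y - x) = a ^+ 2 by rewrite -edist_sqr edistC.
have Db : dot (z - y) (z - y) = b ^+ 2 by rewrite -edist_sqr edistC.
have uv : dot (y - x) (z - y) = a * b.
  have : dot (1 *: (y - x) + 1 *: (z - y)) (1 *: (y - x) + 1 *: (z - y)) = (a + b) ^+ 2.
    have -> : 1 *: (y - x) + 1 *: (z - y) = z - x by apply/rowP => i; rewrite !mxE; ring.
    by rewrite -edist_sqr edistC xz.
  rewrite dotDZ Da Db => h; nra.
have : dot (b *: (y - x) + (- a) *: (z - y)) (b *: (y - x) + (- a) *: (z - y)) = 0.
  by rewrite dotDZ Da Db uv; ring.
move/dot_eq0/eqP; rewrite scaleNr subr_eq0 => /eqP //.
Qed.

Lemma disjoint_eballs_edist c1 c2 r1 r2 : 0 < r1 -> 0 < r2 ->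
  eball c1 r1 `&` eball c2 r2 = set0 -> r1 + r2 <= edist c1 c2.
Proof.
move=> r10 r20 disj; rewrite leNgt; apply/negP => close.
have s0 : 0 < r1 + r2 by rewrite addr_gt0.
set t := r1 / (r1 + r2).
have [t0 t1] : 0 < t /\ 0 < 1 - t.
  by rewrite subr_gt0 ltr_pdivrMr // mul1r ltrDl divr_gt0.
have ts : t * (r1 + r2) = r1 by rewrite divfK ?gt_eqF.
have [c c_ball1 c_ball2] : exists2 c, eball c1 r1 c & eball c2 r2 c.
  exists (c1 + t *: (c2 - c1)).
    rewrite /eball /= edistC edist_lerp gtr0_norm // -ts.
    by rewrite ltr_pM2l.
  have -> : c1 + t *: (c2 - c1) = c2 + (1 - t) *: (c1 - c2).
    by apply/rowP => i; rewrite !mxE; ring.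
  rewrite /eball /= edistC edist_lerp gtr0_norm // edistC.
  have -> : r2 = (1 - t) * (r1 + r2) by rewrite mulrBl ts mul1r addrC addKr.
  by rewrite ltr_pM2l.
by have : (eball c1 r1 `&` eball c2 r2) c by []; rewrite disj.
Qed.

Lemma touching_eballs c1 c2 p r1 r2 : 0 < r1 -> 0 < r2 ->
  edist p c1 = r1 -> edist p c2 = r2 -> eball c1 r1 `&` eball c2 r2 = set0 ->
  r2 *: (p - c1) = r1 *: (c2 - p).
Proof.
move=> r10 r20 pc1 pc2 disj.
have c1p : edist c1 p = r1 by rewrite edistC.
rewrite -c1p -pc2; apply: edist_triangle_eq; apply/le_anti.
by rewrite edist_triangle c1p pc2 disjoint_eballs_edist.
Qed.

Lemma sphere_outside_eball w y q del r : unit_sphere w -> del < r ->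
  edist q y = del -> r <= edist q (y - (r - del) *: w) -> q = y + del *: w.
Proof.
move=> w1 delr qy qout.
have Dw := unit_sphere_dot w1.
have Dq : dot (q - y) (q - y) = del ^+ 2 by rewrite -edist_sqr qy.
have del0 : 0 <= del by rewrite -qy edist_ge0.
set a := dot (q - y) w.
have delle : del <= a.
  have : r ^+ 2 <= dot (1 *: (q - y) + (r - del) *: w) (1 *: (q - y) + (r - del) *: w).
    have -> : 1 *: (q - y) + (r - del) *: w = q - (y - (r - del) *: w).
      by apply/rowP => i; rewrite !mxE; ring.
    by rewrite -edist_sqr lerXn2r // ?nnegrE ?edist_ge0 // (le_trans del0) ?ltW.
  rewrite dotDZ Dq Dw -/a => h.
  have : 2 * (r - del) * del <= 2 * (r - del) * a by nra.
  by rewrite ler_pM2l // mulr_gt0 // subr_gt0.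
have : dot (1 *: (q - y) + (- del) *: w) (1 *: (q - y) + (- del) *: w) = 0.
  by apply/eqP; rewrite eq_le dot_ge0 andbT dotDZ Dq Dw -/a; nra.
move/dot_eq0 => h; apply/eqP; rewrite -subr_eq0 -h.
by apply/eqP/rowP => i; rewrite !mxE; ring.
Qed.

Lemma coord_le_edist x y i : `|x ord0 i - y ord0 i| <= edist x y.
Proof.
rewrite -sqrtr_sqr /edist ler_sqrt ?sumr_ge0 // => [|j _]; last exact: sqr_ge0.
by rewrite (bigD1 i) //= lerDl; apply: sumr_ge0 => j _; exact: sqr_ge0.
Qed.

Lemma mxnorm_le_edist x y : `|x - y| <= edist x y.
Proof.
rewrite [`|_|]mx_normrE; apply: bigmax_le; first exact: edist_ge0.
by move=> [i j] _ /=; rewrite (ord1 i) !mxE; exact: coord_le_edist.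
Qed.

(* The sup-norm balls of the matrix topology are small in the Euclidean
   distance: a coordinate bound r gives edist <= r * sqrt d < r * (d + 1). *)
Lemma ball_edist_lt x e : 0 < e ->
  exists2 r : R, 0 < r & forall z, ball x r z -> edist x z < e.
Proof.
move=> e0; have N0 : 0 < d%:R + 1 :> R by rewrite ltr_wpDl.
exists (e / (d%:R + 1)); first by rewrite divr_gt0.
set r := e / _; have r0 : 0 < r by rewrite divr_gt0.
move=> z [_ xz]; rewrite edist_lt_sqr //.
have : dot (x - z) (x - z) <= \sum_(i < d) r ^+ 2.
  apply: ler_sum => i _; rewrite !mxE -expr2 -real_normK ?num_real //.
  by rewrite lerXn2r ?nnegrE // ltW // xz.
rewrite sumr_const card_ord -mulr_natr => /le_lt_trans; apply.
have -> : e = r * (d%:R + 1) by rewrite divfK ?gt_eqF.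
have := ler0n R d; nra.
Qed.

Lemma continuous_edist y : continuous (edist y).
Proof.
move=> z0; apply/(@cvg_ballP _ _ _ (nbhs z0) (nbhs_filter z0)) => e e0.
apply/nbhs_ballP; have [r r0 zr] := ball_edist_lt z0 e0.
exists r => // z /zr z0z; rewrite /ball /= ltr_norml.
have := edist_triangle y z0 z; have := edist_triangle y z z0.
rewrite [edist z z0]edistC => ? ?; apply/andP; split; lra.
Qed.

End Euclidean.

Definition is_nearest (R : realType) (d : nat) (A : set 'rV[R]_d) (x a : 'rV[R]_d) :=
  A a /\ forall b, A b -> edist x a <= edist x b.

Lemma subset_eclosure (R : realType) (d : nat) (A : set 'rV[R]_d) : A `<=` eclosure A.
Proof. by move=> x Ax e e0; exists x; rewrite edistxx. Qed.

Lemma exists_nearest_point (R : realType) (d : nat) (A : set 'rV[R]_d) a y :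
  A a -> eclosed A -> exists p, is_nearest A y p.
Proof.
move=> Aa clA; set M := edist y a.
set K := A `&` [set z | edist y z <= M].
have approx z : closure K z -> forall e, 0 < e -> exists2 w, K w & edist z w < e.
  move=> zK e e0; have [r r0 hr] := ball_edist_lt z e0.
  by have [w [Kw /hr]] := zK _ (nbhsx_ballx z r r0); exists w.
have cK : closed K.
  move=> z zK; split.
    by apply: clA => e /(approx z zK) [w [Aw _] zw]; exists w.
  rewrite /= leNgt -subr_gt0; apply/negP => /(approx z zK) [w [_ /= Mw] zw].
  have := edist_triangle y w z; rewrite [edist w z]edistC; lra.
have bK : bounded_set K.
  exists (M + `|y|); split; first by rewrite num_real.
  move=> M' M'M x [_ /= Mx]; have := ler_normD (x - y) y; rewrite subrK.
  have := mxnorm_le_edist x y; rewrite edistC; lra.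
have [|c] := EVT_min_rV _ (bounded_closed_compact bK cK)
  (continuous_subspaceT (@continuous_edist _ _ y)); first by exists a; split => /=.
rewrite inE => -[Ac Mc] cmin; exists c; split => // b Ab.
have [bM|/ltW] := leP (edist y b) M; first by apply: cmin; rewrite inE.
exact: le_trans.
Qed.

Lemma nearest_point_of_mem (R : realType) (d : nat) (A : set 'rV[R]_d) y p :
  A y -> is_nearest A y p -> p = y.
Proof.
move=> Ay [_ pmin]; apply/esym/edist_eq0/le_anti.
by rewrite edist_ge0 -(edistxx y) pmin.
Qed.

(* Points p + t (y - p) with 0 < t < 1 are closer to y than p, hence not in A. *)
Lemma nearest_point_boundary (R : realType) (d : nat) (A : set 'rV[R]_d) y p :
  ~ A y -> is_nearest A y p -> eboundary A p.
Proof.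
move=> Ay [Ap pmin]; split; first exact: subset_eclosure.
set del := edist p y.
have del0 : 0 < del by apply: edist_gt0 => py; rewrite -py in Ay.
move=> e e0; set t := e / (e + del).
have ed0 : 0 < e + del by rewrite addr_gt0.
have [t0 t1] : 0 < t /\ 0 < 1 - t.
  by rewrite subr_gt0 ltr_pdivrMr // mul1r ltrDl divr_gt0.
exists (p + t *: (y - p)); split.
  move=> /pmin; apply/negP; rewrite -ltNge.
  have -> : p + t *: (y - p) = y + (1 - t) *: (p - y).
    by apply/rowP => i; rewrite !mxE; ring.
  rewrite edist_lerp gtr0_norm // [edist y p]edistC -/del gtr_pMl //.
  by rewrite ltrBlDr ltrDl.
rewrite edist_lerp gtr0_norm // -/del /t mulrAC ltr_pdivrMr // ltr_pM2l //.
lra.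
Qed.

Section Reach.
Variables (R : realType) (d : nat) (rad : R) (A : set 'rV[R]_d).
Hypothesis rad_gt0 : 0 < rad.
Hypothesis A_supported : R_supported rad A.
Hypothesis Ac_supported : R_supported rad (eclosure (~` A)).
Hypothesis boundary_eq : eboundary A = eboundary (eclosure (~` A)).

Lemma boundary_inner_eball p : eboundary A p ->
  exists2 w, unit_sphere w & eball (p + rad *: w) rad `<=` A.
Proof.
rewrite boundary_eq => /Ac_supported [w [w1 disj]]; exists w => // z zb.
apply: contrapT => Az; have : (eclosure (~` A) `&` eball (p + rad *: w) rad) z.
  by split => //; exact: subset_eclosure.
by rewrite disj.
Qed.

Lemma nearest_point_unique y p q : edist y p < rad ->
  is_nearest A y p -> is_nearest A y q -> q = p.
Proof.
move=> prad np nq; have [Ay|Ay] := pselect (A y).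
  by rewrite (nearest_point_of_mem Ay np) (nearest_point_of_mem Ay nq).
have [[Ap pmin] [Aq qmin]] := (np, nq).
have bdp := nearest_point_boundary Ay np.
set del := edist y p.
have del0 : 0 < del by apply: edist_gt0 => yp; rewrite yp in Ay.
have [w w1 inner] := boundary_inner_eball bdp.
have pw : edist p (p + rad *: w) = rad by rewrite edist_add_unit // ltW.
have p_def : p = y + del *: w.
  have free : eball y del `&` eball (p + rad *: w) rad = set0.
    apply/disjoints_subset => z /= zy /inner /pmin.
    by rewrite [edist y z]edistC leNgt zy.
  have := touching_eballs del0 rad_gt0 (edistC p y) pw free.
  rewrite [p + _ - p]addrC addKr scalerA mulrC -scalerA.
  by move=> /(scalerI (lt0r_neq0 rad_gt0)) <-; rewrite addrC subrK.
have [v [v1 Av]] := A_supported bdp.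
have pv : edist p (p + rad *: v) = rad by rewrite edist_add_unit // ltW.
have vw : p + rad *: v = y - (rad - del) *: w.
  have disj : eball (p + rad *: v) rad `&` eball (p + rad *: w) rad = set0.
    apply/disjoints_subset => z zv /inner Az.
    by have : (A `&` eball (p + rad *: v) rad) z by []; rewrite Av.
  have := touching_eballs rad_gt0 rad_gt0 pv pw disj.
  rewrite [p + rad *: w - p]addrC addKr opprD addNKr.
  move=> /(scalerI (lt0r_neq0 rad_gt0)) /eqP.
  rewrite eqr_oppLR => /eqP ->; rewrite {1}p_def.
  by apply/rowP => i; rewrite !mxE; ring.
rewrite p_def; apply: (sphere_outside_eball (r := rad)) => //.
- by rewrite edistC; apply/le_anti; rewrite qmin // pmin.
- rewrite -vw leNgt; apply/negP => qv.
  by have : (A `&` eball (p + rad *: v) rad) q by []; rewrite Av.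
Qed.

End Reach.

Theorem mainTheorem9 (R : realType) (d : nat) (rad : R) (A : set 'rV[R]_d) :
  0 < rad ->
  body A -> R_supported rad A ->
  body (eclosure (~` A)) -> R_supported rad (eclosure (~` A)) ->
  eboundary A = eboundary (eclosure (~` A)) ->
  (rad%:E <= reach A)%E.
Proof.
move=> rad0 [_ clA] SA _ SAc EB; apply/ereal_infP => _ [a Aa <-].
apply: ereal_sup_ubound; exists rad => //; split => // y ya.
have [p np] := exists_nearest_point y Aa clA.
exists p; split => // q nq.
apply: (nearest_point_unique rad0 SA SAc EB _ np nq).
by apply: le_lt_trans ya; case: np => _; apply.
Qed.
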